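(* Let $m,k,n\ge1$ be integers; let $\lambda_i,\mu_i>0$ ($i\le k$), $\alpha_j,\beta_j,u_j,v_j>0$ ($j\le n$); let $\theta:\{0,\dots,m\}\to\mathbb{R}$ satisfy $0\le\theta\le1$, $\theta(b)>0$ for $b<m$, $\theta(m)=0$. Consider the CTMC on the set of vectors $w=(x_1,\dots,x_k;a_1,\dots,a_n)$, $x_i\in\mathbb{Z}_{\ge0}$, $a_j\in\{I,W,T\}$, with $\mathrm{busy}(w)=\sum_i x_i+\sum_j1_{\{a_j=T\}}\le m$, whose only nonzero rates are: $x\to x+e_i$ at rate $\lambda_i\theta(\mathrm{busy}(w))$ and $x+e_i\to x$ at rate $(x_i+1)\mu_i$; and, for each $j$ changing only $a_j$: $I\to W$ at rate $\alpha_j$, $W\to I$ at rate $\beta_j$, $W\to T$ at rate $u_j\theta(\mathrm{busy}(w))$ ($w$ the current state), $T\to W$ at rate $v_j$. Its steady state distribution has the form $p(w)=B\big(\prod_{r=0}^{\mathrm{busy}(w)-1}\theta(r)\big)\big(\prod_{i}\rho_i^{x_i}/x_i!\big)\prod_j(\alpha_j/\beta_j)^{1_{\{a_j=W\}}}(\alpha_ju_j/(\beta_jv_j))^{1_{\{a_j=T\}}}$, $\rho_i=\lambda_i/\mu_i$, with normalizing constant $B$. Let $\rho=\sum_{i=1}^k\rho_i$ and $\mathrm{i}=\sqrt{-1}$. For $j\in\{1,\dots,n\}$ let $P[I_j]$ be the steady state probability that $a_j=I$, and define $$c_{j,b}=\frac1n\sum_{t=0}^{n-1}\prod_{l\in\{1,\dots,n\}\setminus\{j\}}\Big[1+\frac{\alpha_l}{\beta_l}+e^{\frac{-2\pi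 \mathrm{i} t}{n}}\frac{\alpha_lu_l}{\beta_lv_l}\Big]e^{\frac{2\pi \mathrm{i} tb}{n}}\qquad\forall b\in\{0,1,\dots,\min[n-1,m]\}.$$ Then $$P[I_j]=B\sum_{b=0}^{\min[n-1,m]}\sum_{x=0}^{m-b}\Big(\prod_{r=0}^{x+b-1}\theta(r)\Big)\frac{\rho^x}{x!}c_{j,b}.$$ In the special case with no non-persistent users (i.e. $\rho\to0$), $$P[I_j]=\tilde B\sum_{b=0}^{\min[n-1,m]}\Big(\prod_{r=0}^{b-1}\theta(r)\Big)c_{j,b},$$ where $\tilde B$ is the normalizing constant of that special case.
   Context: Multi-channel access model with $m$ channels, $k$ classes of non-persistent users and $n$ persistent users with activity states Idle ($I$), Waiting ($W$), Transmitting ($T$). Empty products $\prod_{r=0}^{-1}\theta(r)$ equal $1$. In the case with no non-persistent users, the steady state probability of persistent configuration $a$ (with $\sum_j1_{\{a_j=T\}}\le m$) is $\tilde B\big(\prod_{r=0}^{\sum_j1_{\{a_j=T\}}-1}\theta(r)\big)\prod_j(\alpha_j/\beta_j)^{1_{\{a_j=W\}}}(\alpha_ju_j/(\beta_jv_j))^{1_{\{a_j=T\}}}$. *)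

From HB Require Import structures.
From mathcomp Require Import all_boot all_order all_algebra.
From mathcomp Require Import reals trigo complex.
Set Implicit Arguments.
Unset Strict Implicit.
Unset Printing Implicit Defensive.
Import Order.TTheory GRing.Theory Num.Theory.
Local Open Scope ring_scope.

Definition Idle  : 'I_3 := @Ordinal 3 0 isT.
Definition Wait  : 'I_3 := @Ordinal 3 1 isT.
Definition Trans : 'I_3 := @Ordinal 3 2 isT.

Section Model.
Variables (R : realType) (m k n : nat).
Variables (lam mu : 'I_k -> R) (alpha beta u v : 'I_n -> R) (theta : nat -> R).

(* A state w = (x ; a).  Since busy(w) <= m, every x_i <= m, so x_i : 'I_m.+1
   loses no state. *)
Definition busy (x : {ffun 'I_k -> 'I_m.+1}) (a : {ffun 'I_n -> 'I_3}) : nat :=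
  (\sum_(i < k) (x i : nat) + \sum_(j < n) (a j == Trans))%N.

Definition rho_i (i : 'I_k) : R := lam i / mu i.

Definition weight (x : {ffun 'I_k -> 'I_m.+1}) (a : {ffun 'I_n -> 'I_3}) : R :=
  (\prod_(r < busy x a) theta r)
  * (\prod_(i < k) ((rho_i i) ^+ (x i) / ((x i)`!)%:R))
  * \prod_(j < n) ((alpha j / beta j) ^+ (a j == Wait)
                   * (alpha j * u j / (beta j * v j)) ^+ (a j == Trans)).

Definition Bconst : R :=
  (\sum_(x : {ffun 'I_k -> 'I_m.+1})
     \sum_(a : {ffun 'I_n -> 'I_3} | (busy x a <= m)%N) weight x a)^-1.

Definition PIdle (j : 'I_n) : R :=
  \sum_(x : {ffun 'I_k -> 'I_m.+1})
     \sum_(a : {ffun 'I_n -> 'I_3} | (busy x a <= m)%N && (a j == Idle))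
        Bconst * weight x a.

(* Special case without non-persistent users: states are just a. *)
Definition busyT (a : {ffun 'I_n -> 'I_3}) : nat := (\sum_(j < n) (a j == Trans))%N.

Definition weight0 (a : {ffun 'I_n -> 'I_3}) : R :=
  (\prod_(r < busyT a) theta r)
  * \prod_(j < n) ((alpha j / beta j) ^+ (a j == Wait)
                   * (alpha j * u j / (beta j * v j)) ^+ (a j == Trans)).

Definition Btilde : R :=
  (\sum_(a : {ffun 'I_n -> 'I_3} | (busyT a <= m)%N) weight0 a)^-1.

Definition PIdle0 (j : 'I_n) : R :=
  \sum_(a : {ffun 'I_n -> 'I_3} | (busyT a <= m)%N && (a j == Idle))
     Btilde * weight0 a.

Local Open Scope complex_scope.

Definition cexp (y : R) : R[i] := (cos y +i* sin y)%C.

Definition c_coef (j : 'I_n) (b : nat) : R[i] :=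
  (n%:R)^-1 * \sum_(t < n)
     (\prod_(l < n | l != j)
        ((1 + alpha l / beta l)%:C
         + cexp (- (2 * pi * t%:R / n%:R)) * (alpha l * u l / (beta l * v l))%:C))
     * cexp (2 * pi * t%:R * b%:R / n%:R).

End Model.

From HB Require Import structures.
From mathcomp Require Import all_boot all_order all_algebra.
From mathcomp Require Import reals trigo complex.
From mathcomp Require Import ring.
Import Order.TTheory GRing.Theory Num.Theory.
Local Open Scope ring_scope.

(* The product-form weight of (x ; a) factorises into the theta-prefix product of
   busy(x ; a), the Poisson weight of x and the weight of a.  Grouping the states by
   s = sum_i x_i, the Poisson weights add up to rho^s / s! (multinomial theorem, read off
   as a coefficient of a product of truncated exponential series).  Grouping the
   configurations a with a_j = I by the number b of transmitting users, their weights are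
   the coefficients of w^b in prod_(l <> j) (1 + alpha_l/beta_l + w alpha_l u_l/(beta_l v_l)),
   a polynomial of degree < n; c_(j,b) recovers them by discrete Fourier inversion at the
   n-th roots of unity. *)

Lemma big_partition_nat {V : nmodType} {I : finType} (P : pred I) (f : I -> nat)
    (N : nat) (F : I -> V) :
  (forall i, P i -> (f i <= N)%N) ->
  \sum_(i | P i) F i = \sum_(s < N.+1) \sum_(i | P i && (f i == s)) F i.
Proof.
move=> fN; rewrite (partition_big (fun i => inord (f i) : 'I_N.+1) xpredT) //.
apply: eq_bigr => s _; apply: eq_bigl => i.
by case Pi: (P i) => //=; rewrite -val_eqE /= inordK // ltnS fN.
Qed.

Section Multinomial.
Local Set Implicit Arguments.
Local Unset Strict Implicit.
Variable F : numFieldType.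

Lemma exprDn_fact (a b : F) (s : nat) :
  (a + b) ^+ s / s`!%:R
  = \sum_(y < s.+1) a ^+ y / y`!%:R * (b ^+ (s - y) / (s - y)`!%:R).
Proof.
have fact_neq0 z : z`!%:R != 0 :> F by rewrite pnatr_eq0 -lt0n fact_gt0.
rewrite addrC exprDn mulr_suml; apply: eq_bigr => y _.
have ys : (y <= s)%N by rewrite -ltnS.
have binE : 'C(s, y)%:R = s`!%:R / (y`!%:R * (s - y)`!%:R) :> F.
  by rewrite -(bin_fact ys) !natrM mulfK // mulf_neq0.
by rewrite -mulr_natr binE; field; rewrite !fact_neq0.
Qed.

Definition trunc_exp (r : F) (M : nat) : {poly F} := \poly_(y < M) (r ^+ y / y`!%:R).

Lemma coef_prod_trunc_exp {I : finType} (r : I -> F) (M s : nat) : (s < M)%N ->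
  (\prod_i trunc_exp (r i) M)`_s = (\sum_i r i) ^+ s / s`!%:R.
Proof.
elim/big_rec2: _ s => [s _|i p rho _ IH s sM].
  by rewrite coef1 expr0n; case: s => [|s] /=; rewrite ?fact0 ?invr1 ?mulr1 ?mul0r.
rewrite coefM exprDn_fact; apply: eq_bigr => y _.
have yM : (y < M)%N by rewrite (leq_ltn_trans _ sM) // -ltnS.
by rewrite coef_poly yM IH // (leq_ltn_trans (leq_subr _ _) sM).
Qed.

Lemma coef_prod_poly_ffun {I : finType} (M s : nat) (g : I -> nat -> F) :
  (\prod_i \poly_(y < M) g i y)`_s
  = \sum_(x : {ffun I -> 'I_M} | (\sum_i (x i : nat))%N == s) \prod_i g i (x i).
Proof.
under eq_bigr do rewrite poly_def.
rewrite bigA_distr_bigA /= coef_sum [RHS]big_mkcond /=; apply: eq_bigr => x _.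
under eq_bigr do rewrite -mul_polyC.
by rewrite big_split /= prodrXr -rmorph_prod mul_polyC coefZ coefXn eq_sym mulr_natr mulrb.
Qed.

Lemma multinomial_fact {I : finType} (r : I -> F) (M s : nat) : (s < M)%N ->
  \sum_(x : {ffun I -> 'I_M} | (\sum_i (x i : nat))%N == s)
     \prod_i (r i ^+ x i / (x i)`!%:R)
  = (\sum_i r i) ^+ s / s`!%:R.
Proof.
by move=> sM; rewrite -(coef_prod_trunc_exp r sM) /trunc_exp coef_prod_poly_ffun.
Qed.

Lemma sum_multinomial_le {I : finType} (r : I -> F) (G : nat -> F) (M N : nat) :
  (N < M)%N ->
  \sum_(x : {ffun I -> 'I_M} | (\sum_i (x i : nat) <= N)%N)
     G (\sum_i (x i : nat))%N * \prod_i (r i ^+ x i / (x i)`!%:R)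
  = \sum_(s < N.+1) G s * ((\sum_i r i) ^+ s / s`!%:R).
Proof.
pose size_x (x : {ffun I -> 'I_M}) := (\sum_i (x i : nat))%N.
move=> NM; rewrite (big_partition_nat _ size_x N) // /size_x.
apply: eq_bigr => s _; have sN : (s <= N)%N by rewrite -ltnS.
rewrite -(multinomial_fact r (leq_ltn_trans sN NM)) mulr_sumr.
apply: eq_big => [x|x /andP[_ /eqP ->] //].
by case: eqP => [->|]; rewrite ?andbF ?andbT.
Qed.

End Multinomial.

Lemma sum_expr_unity_root (F : idomainType) (z : F) (n : nat) :
  z ^+ n = 1 -> z != 1 -> \sum_(t < n) z ^+ t = 0.
Proof.
move=> zn1 z_neq1; have /eqP := subrX1 z n.
by rewrite zn1 subrr eq_sym mulf_eq0 subr_eq0 (negbTE z_neq1) => /eqP.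
Qed.

Section ComplexExp.
Variable R : realType.
Local Open Scope complex_scope.

Lemma cexp0 : cexp (0 : R) = 1.
Proof. by rewrite /cexp sin0 cos0. Qed.

Lemma cexpD (x y : R) : cexp (x + y) = cexp x * cexp y.
Proof. by rewrite /cexp sinD cosD; simpc; rewrite [sin x * _ + _]addrC. Qed.

Lemma cexpX (x : R) (d : nat) : cexp x ^+ d = cexp (x *+ d).
Proof. by elim: d => [|d IH]; rewrite ?cexp0 // exprS IH mulrS cexpD. Qed.

Lemma cexp_2pi_natr (d : nat) : cexp (pi *+ 2 *+ d : R) = 1.
Proof. by rewrite -cexpX /cexp cos2pi sin2pi expr1n. Qed.

Lemma cexp_eq1N (x : R) : cexp x = 1 -> cexp (- x) = 1.
Proof. by move=> ex1; rewrite -[LHS]mulr1 -ex1 -cexpD addNr cexp0. Qed.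

(* cexp y is a square root of cexp (2 y) = 1, hence real, so sin y = 0. *)
Lemma cexp_mulr2n_neq1 (y : R) : sin y != 0 -> cexp (y *+ 2) != 1.
Proof.
move=> siny; apply: contra siny => /eqP; rewrite -cexpX => /eqP.
by rewrite sqrf_eq1 => /orP[] /eqP /(congr1 (@complex.Im R)) /= ->; rewrite ?oppr0.
Qed.

Lemma sin_pi_frac_gt0 (c n : nat) : (0 < c < n)%N -> 0 < sin (pi * (c%:R / n%:R) : R).
Proof.
case/andP => c_gt0 cn; apply: sin_gt0_pi.
have n_gt0 : (0 < n)%N := ltn_trans c_gt0 cn.
rewrite mulr_gt0 ?pi_gt0 ?divr_gt0 ?ltr0n //=.
by rewrite gtr_pMr ?pi_gt0 // ltr_pdivrMr ?ltr0n // mul1r ltr_nat.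
Qed.

Lemma dft_orthogonality (n b d : nat) : (b < n)%N -> (d < n)%N ->
  (n%:R)^-1 * \sum_(t < n) cexp (- (2 * pi * t%:R / n%:R)) ^+ d
                        * cexp (2 * pi * t%:R * b%:R / n%:R) = (b == d)%:R :> R[i].
Proof.
move=> bn dn.
have n_neq0 : (n%:R : R) != 0 by rewrite pnatr_eq0 -lt0n (leq_ltn_trans _ bn).
set y : R := pi * ((b%:R - d%:R) / n%:R).
have -> : \sum_(t < n) cexp (- (2 * pi * t%:R / n%:R)) ^+ d
            * cexp (2 * pi * t%:R * b%:R / n%:R) = \sum_(t < n) cexp (y *+ 2) ^+ t.
  by apply: eq_bigr => t _; rewrite !cexpX -cexpD; congr cexp; rewrite /y; field.
have [bd|bd] := eqVneq b d.
  under eq_bigr do rewrite /y bd subrr mul0r mulr0 mul0rn cexp0 expr1n.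
  by rewrite sumr_const card_ord mulVf // pnatr_eq0 -lt0n (leq_ltn_trans _ bn).
rewrite sum_expr_unity_root ?mulr0 //.
  rewrite cexpX; have -> : y *+ 2 *+ n = pi *+ 2 *+ b - pi *+ 2 *+ d by rewrite /y; field.
  by rewrite cexpD cexp_2pi_natr cexp_eq1N ?cexp_2pi_natr ?mulr1.
apply: cexp_mulr2n_neq1; rewrite /y.
have [db|bd'] := leqP d b.
  rewrite -natrB //; apply/lt0r_neq0/sin_pi_frac_gt0.
  by rewrite subn_gt0 ltn_neqAle eq_sym bd db (leq_ltn_trans (leq_subr _ _) bn).
rewrite -opprB -(natrB _ (ltnW bd')) mulNr mulrN sinN oppr_eq0.
apply/lt0r_neq0/sin_pi_frac_gt0.
by rewrite subn_gt0 bd' (leq_ltn_trans (leq_subr _ _) dn).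
Qed.

End ComplexExp.

Section PersistentUsers.
Local Set Implicit Arguments.
Local Unset Strict Implicit.
Variables (R : realType) (n : nat) (alpha beta u v : 'I_n -> R).
Local Open Scope complex_scope.

Definition user_weight (l : 'I_n) (s : 'I_3) : R :=
  (alpha l / beta l) ^+ (s == Wait) * (alpha l * u l / (beta l * v l)) ^+ (s == Trans).

Definition config_weight (a : {ffun 'I_n -> 'I_3}) : R := \prod_l user_weight l (a l).

Definition idle_weight (j : 'I_n) (b : nat) : R :=
  \sum_(a : {ffun 'I_n -> 'I_3} | (a j == Idle) && (busyT a == b)) config_weight a.

Lemma busyT_idle_lt {a : {ffun 'I_n -> 'I_3}} {j : 'I_n} :
  a j == Idle -> (busyT a < n)%N.
Proof.
move/eqP=> aj; rewrite /busyT (bigD1 j) //= aj add0n.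
apply: (@leq_ltn_trans (\sum_(l < n | l != j) 1)%N).
  by apply: leq_sum => l _; exact: leq_b1.
by rewrite sum1_card cardC1 card_ord ltn_predL (leq_ltn_trans _ (ltn_ord j)).
Qed.

Lemma sum_I3 (V : nmodType) (f : 'I_3 -> V) : \sum_s f s = f Idle + f Wait + f Trans.
Proof. by rewrite !big_ord_recl big_ord0 addr0 addrA; congr (f _ + f _ + f _); exact: val_inj. Qed.

Lemma user_weight_Idle l : user_weight l Idle = 1.
Proof. by rewrite /user_weight /= mulr1. Qed.

Lemma user_weight_Wait l : user_weight l Wait = alpha l / beta l.
Proof. by rewrite /user_weight /= mulr1. Qed.

Lemma user_weight_Trans l : user_weight l Trans = alpha l * u l / (beta l * v l).
Proof. by rewrite /user_weight /= mul1r. Qed.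

Lemma sum_user_weight (w : R[i]) l :
  \sum_s (user_weight l s)%:C * w ^+ (s == Trans)
  = (1 + alpha l / beta l)%:C + w * (alpha l * u l / (beta l * v l))%:C.
Proof.
rewrite sum_I3 user_weight_Idle user_weight_Wait user_weight_Trans.
rewrite [Idle == Trans]/= [Wait == Trans]/= eqxx expr0 expr1 !mulr1 rmorphD.
by rewrite rmorph1 [w * _]mulrC.
Qed.

Lemma prod_idle_expand (w : R[i]) (j : 'I_n) :
  \prod_(l < n | l != j) ((1 + alpha l / beta l)%:C + w * (alpha l * u l / (beta l * v l))%:C)
  = \sum_(a : {ffun 'I_n -> 'I_3} | a j == Idle) (config_weight a)%:C * w ^+ busyT a.
Proof.
(* Factor j is replaced by the indicator of [a j = Idle], whose sum over 'I_3 is 1. *)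
pose G l (s : 'I_3) : R[i] := (if l == j then (s == Idle)%:R else 1)
                       * ((user_weight l s)%:C * w ^+ (s == Trans)).
have Gj : \sum_s G j s = 1.
  rewrite /G eqxx (bigD1 Idle) // big1 => [|s /negbTE -> /=]; last by rewrite mul0r.
  by rewrite eqxx user_weight_Idle [Idle == Trans]/= mul1r mulr1 rmorph1; exact: addr0.
have Gl l : l != j -> \sum_s G l s
    = (1 + alpha l / beta l)%:C + w * (alpha l * u l / (beta l * v l))%:C.
  by move=> /negbTE lj; rewrite -sum_user_weight; apply: eq_bigr => s _; rewrite /G lj mul1r.
have -> : \prod_(l < n | l != j)
            ((1 + alpha l / beta l)%:C + w * (alpha l * u l / (beta l * v l))%:C)
          = \prod_l \sum_s G l s.
  rewrite [RHS](bigD1 j) // Gj Monoid.mul1m; apply: eq_big => [l //|l lj]; exact/esym/Gl.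
rewrite bigA_distr_bigA [RHS]big_mkcond; apply: eq_bigr => a _ /=.
rewrite big_split /= (bigD1 j) //= big1 => [|l /negbTE -> //].
rewrite eqxx mulr1 big_split /= prodrXr -rmorph_prod.
by case: (a j == Idle); rewrite ?mul1r ?mul0r.
Qed.

Lemma c_coefE (j : 'I_n) (b : nat) :
  (b < n)%N -> c_coef alpha beta u v j b = (idle_weight j b)%:C.
Proof.
move=> bn; rewrite /c_coef.
under eq_bigr do rewrite prod_idle_expand big_distrl /=.
rewrite exchange_big /= mulr_sumr /idle_weight rmorph_sum big_mkcondr /=.
apply: eq_bigr => a aj; under eq_bigr do rewrite -mulrA.
have busy_lt := busyT_idle_lt aj.
rewrite -mulr_sumr mulrCA dft_orthogonality // eq_sym.
by case: (busyT a == b); rewrite ?mulr1 ?mulr0.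
Qed.

Lemma sum_idle_by_busy (K : nat -> R) (m : nat) (j : 'I_n) :
  \sum_(a : {ffun 'I_n -> 'I_3} | (busyT a <= m)%N && (a j == Idle))
     K (busyT a) * config_weight a
  = \sum_(b < (minn n.-1 m).+1) K b * idle_weight j b.
Proof.
rewrite (big_partition_nat _ (@busyT n) (minn n.-1 m)) => [|a /andP[am aj]]; last first.
  by rewrite leq_min am andbT -ltnS (ltn_predK (busyT_idle_lt aj)) (busyT_idle_lt aj).
apply: eq_bigr => b _; have := ltn_ord b; rewrite ltnS leq_min => /andP[_ bm].
rewrite /idle_weight mulr_sumr; apply: eq_big => [a|a /andP[_ /eqP -> //]].
by apply/idP/idP => [/andP[/andP[_ ->] ->] //|/andP[-> /eqP ->]]; rewrite bm eqxx.
Qed.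

End PersistentUsers.

Section Model.
Variables (R : realType) (m k n : nat).
Variables (lam mu : 'I_k -> R) (alpha beta u v : 'I_n -> R) (theta : nat -> R).

Let rho : R := \sum_i rho_i lam mu i.

Definition nonpersistent_mass (b : nat) : R :=
  \sum_(s < (m - b).+1) (\prod_(r < s + b) theta r) * (rho ^+ s / s`!%:R).

Lemma sum_weight_busyT (a : {ffun 'I_n -> 'I_3}) : (busyT a <= m)%N ->
  \sum_(x : {ffun 'I_k -> 'I_m.+1} | (busy x a <= m)%N) weight lam mu alpha beta u v theta x a
  = nonpersistent_mass (busyT a) * config_weight alpha beta u v a.
Proof.
move=> am; pose G s := \prod_(r < s + busyT a) theta r.
have mb_lt : (m - busyT a < m.+1)%N by rewrite ltnS leq_subr.
rewrite /nonpersistent_mass -(sum_multinomial_le (rho_i lam mu) G mb_lt) mulr_suml.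
by apply: eq_bigl => x; rewrite leq_subRL // addnC.
Qed.

Lemma PIdleE (j : 'I_n) :
  PIdle m lam mu alpha beta u v theta j
  = Bconst m lam mu alpha beta u v theta
    * \sum_(b < (minn n.-1 m).+1) \sum_(x < (m - b).+1)
        ((\prod_(r < x + b) theta r) * rho ^+ x / x`!%:R) * idle_weight alpha beta u v j b.
Proof.
rewrite /PIdle; under eq_bigr do rewrite -mulr_sumr.
rewrite -mulr_sumr; congr (_ * _).
rewrite (exchange_big_dep (fun a => (busyT a <= m)%N && (a j == Idle))) /=; last first.
  by move=> x a _ /andP[xam ->]; rewrite andbT (leq_trans _ xam) // leq_addl.
transitivity (\sum_(a | (busyT a <= m)%N && (a j == Idle))
                nonpersistent_mass (busyT a) * config_weight alpha beta u v a).
  apply: eq_bigr => a /andP[am aj]; rewrite -sum_weight_busyT //.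
  by apply: eq_bigl => x; rewrite aj andbT.
rewrite (sum_idle_by_busy alpha beta u v nonpersistent_mass); apply: eq_bigr => b _.
by rewrite mulr_suml; apply: eq_bigr => s _; rewrite mulrA.
Qed.

Lemma PIdle0E (j : 'I_n) :
  PIdle0 m alpha beta u v theta j
  = Btilde m alpha beta u v theta
    * \sum_(b < (minn n.-1 m).+1) (\prod_(r < b) theta r) * idle_weight alpha beta u v j b.
Proof.
rewrite /PIdle0 -mulr_sumr; congr (_ * _).
exact: (sum_idle_by_busy alpha beta u v (fun b => \prod_(r < b) theta r)).
Qed.

End Model.

Local Open Scope complex_scope.

Theorem lemma3 (R : realType) (m k n : nat)
  (lam mu : 'I_k -> R) (alpha beta u v : 'I_n -> R) (theta : nat -> R) :
  (1 <= m)%N -> (1 <= k)%N -> (1 <= n)%N ->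
  (forall i, 0 < lam i) -> (forall i, 0 < mu i) ->
  (forall j, 0 < alpha j) -> (forall j, 0 < beta j) ->
  (forall j, 0 < u j) -> (forall j, 0 < v j) ->
  (forall r, (r <= m)%N -> 0 <= theta r <= 1) ->
  (forall b, (b < m)%N -> 0 < theta b) ->
  theta m = 0 ->
  let rho := \sum_(i < k) rho_i lam mu i in
  forall j : 'I_n,
    (PIdle m lam mu alpha beta u v theta j)%:C
      = (Bconst m lam mu alpha beta u v theta)%:C
        * \sum_(b < (minn n.-1 m).+1) \sum_(x < (m - b).+1)
            ((\prod_(r < x + b) theta r) * rho ^+ x / (x`!)%:R)%:C
            * c_coef alpha beta u v j b
    /\
    (PIdle0 m alpha beta u v theta j)%:C
      = (Btilde m alpha beta u v theta)%:C
        * \sum_(b < (minn n.-1 m).+1)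
            (\prod_(r < b) theta r)%:C * c_coef alpha beta u v j b.
Proof.
move=> _ _ n_gt0 _ _ _ _ _ _ _ _ _ rho j.
have c_coef_real (b : 'I_(minn n.-1 m).+1) :
    c_coef alpha beta u v j b = (idle_weight alpha beta u v j b)%:C.
  apply: c_coefE; have := ltn_ord b; rewrite ltnS leq_min => /andP[bn _].
  by rewrite (leq_ltn_trans bn) // ltn_predL.
split; [rewrite PIdleE | rewrite PIdle0E]; rewrite rmorphM rmorph_sum /=;
  congr (_ * _); apply: eq_bigr => b _; rewrite c_coef_real.
  by rewrite rmorph_sum /=; apply: eq_bigr => x _; rewrite rmorphM.
by rewrite rmorphM.
Qed.
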